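(* Let $X$ be a finite set with similarity function $S$, suppose the target clustering $\mathcal{C}^{\ast}$ satisfies stability with respect to $S$, and let $\eta>0.5$. Consider the interactive process in the $\eta$-merge model with the global split and merge procedures described below. Then (a) every split performed by the split procedure is clean, and (b) every new cluster added (and labelled ''pure'') by the merge procedure contains points from a single target cluster.
   Context: For nonempty $A,A'\subseteq X$ let $S(A,A')$ be the average of $S(x,y)$ over $x\in A,y\in A'$. $\mathcal{C}^{\ast}=\{C^{\ast}_1,\dots,C^{\ast}_k\}$ satisfies stability w.r.t. $S$ if for all $i\neq j$, every nonempty proper $A\subset C^{\ast}_i$ and nonempty $A'\subseteq C^{\ast}_j$: $S(A,C^{\ast}_i\setminus A)>S(A,A')$. A split of a cluster $C_i$ into $C_{i,1},C_{i,2}$ is clean if both are nonempty and for each target cluster $C^{\ast}_j$ meeting $C_i$, either $C^{\ast}_j\cap C_i=C^{\ast}_j\cap C_{i,1}$ or $C^{\ast}_j\cap C_i=C^{\ast}_j\cap C_{i,2}$. Average-linkage tree $T_{glob}$: start with singletons as leaves; repeatedly merge the two current nodes $N_1,N_2$ with largest $S(N_1,N_2)$ (ties arbitrary) into parent $N_1\cup N_2$ until the root $X$ remains; nodes are identified with point sets. Process: start from an initial clustering of $X$, all clusters labelled ''impure''. An oracle repeatedly issues split$(C_i)$ (only if current cluster $C_i$ contains points of two or more target clusters) or merge$(C_i,C_j)$ (only if some target cluster $C^{\ast}_l$ has $|C_i\cap C^{\ast}_l|\ge\eta|C_i|$ and $|C_j\cap C^{\ast}_l|\ge\eta|C_j|$).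 Split procedure: let $N$ be the deepest node of $T_{glob}$ containing $C_i$, with children $N_1,N_2$; replace $C_i$ by $C_i\cap N_1$ and $C_i\cap N_2$, labelled ''impure''. Merge procedure: $\eta_1=1$ if $C_i$ is labelled ''pure'', else $\eta_1=\eta$; $\eta_2$ likewise for $C_j$. Find a node $N$ of $T_{glob}$ of maximal depth with $|N\cap C_i|\ge\eta_1|C_i|$ and $|N\cap C_j|\ge\eta_2|C_j|$; replace $C_i$ by $C_i\setminus N$, $C_j$ by $C_j\setminus N$ (labels kept, empty clusters discarded), and add the new cluster $N\cap(C_i\cup C_j)$ labelled ''pure''. *)

From HB Require Import structures.
From mathcomp Require Import all_boot all_order all_algebra.
Set Implicit Arguments. Unset Strict Implicit. Unset Printing Implicit Defensive.
Import Order.TTheory GRing.Theory Num.Theory.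
Local Open Scope ring_scope.

Section Clustering.
Variables (R : realFieldType) (T : finType) (S : T -> T -> R).

Definition avgS (A A' : {set T}) : R :=
  (\sum_(x in A) \sum_(y in A') S x y) / (#|A| * #|A'|)%:R.

Definition stable (Cstar : {set {set T}}) : Prop :=
  forall Ci Cj, Ci \in Cstar -> Cj \in Cstar -> Ci != Cj ->
  forall A A' : {set T}, A != set0 -> A \proper Ci ->
    A' != set0 -> A' \subset Cj ->
    avgS A A' < avgS A (Ci :\: A).

(* A run of average linkage is the sequence of merges (N1,N2) performed. *)
Definition merge_nodes (P : {set {set T}}) (N1 N2 : {set T}) : {set {set T}} :=
  (P :\: [set N1; N2]) :|: [set N1 :|: N2].

Fixpoint linkage_run (P : {set {set T}}) (steps : seq ({set T} * {set T})) : Prop :=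
  match steps with
  | [::] => P = [set [set: T]]
  | (N1, N2) :: rest =>
      [/\ N1 \in P, N2 \in P, N1 != N2,
          (forall A B, A \in P -> B \in P -> A != B -> avgS A B <= avgS N1 N2)
        & linkage_run (merge_nodes P N1 N2) rest]
  end.

Definition avg_linkage_tree (steps : seq ({set T} * {set T})) : Prop :=
  linkage_run [set [set x] | x : T] steps.

Definition tnodes (steps : seq ({set T} * {set T})) : {set {set T}} :=
  [set [set x] | x : T] :|: [set M | has (fun p => M == p.1 :|: p.2) steps].

Definition child_of (steps : seq ({set T} * {set T})) : rel {set T} :=
  fun M N => has (fun p => (N == p.1 :|: p.2) && ((M == p.1) || (M == p.2))) steps.

Definition depth (steps : seq ({set T} * {set T})) (M : {set T}) : nat :=
  #|[set N in tnodes steps | (N != M) && connect (child_of steps) M N]|.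

Record state := State { clusters : {set {set T}}; pure : {set {set T}} }.

Definition nb_targets_met (Cstar : {set {set T}}) (C : {set T}) : nat :=
  #|[set D in Cstar | C :&: D != set0]|.

Definition split_choice (steps : seq ({set T} * {set T})) (Cstar : {set {set T}})
    (st : state) (C N N1 N2 : {set T}) : Prop :=
  [/\ C \in clusters st, (1 < nb_targets_met Cstar C)%N,
      N \in tnodes steps, C \subset N &
      (forall M, M \in tnodes steps -> C \subset M -> (depth steps M <= depth steps N)%N)]
  /\ ((N1, N2) \in steps /\ N = N1 :|: N2).

Definition split_result (st : state) (C N1 N2 : {set T}) : state :=
  State ((clusters st :\ C) :|: [set C :&: N1; C :&: N2])
        (pure st :\: [set C; C :&: N1; C :&: N2]).

Definition eta_of (eta : R) (st : state) (C : {set T}) : R :=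
  if C \in pure st then 1 else eta.

Definition merge_ok (steps : seq ({set T} * {set T})) (eta : R) (st : state)
    (Ci Cj N : {set T}) : Prop :=
  N \in tnodes steps /\
  (eta_of eta st Ci * #|Ci|%:R <= #|N :&: Ci|%:R) /\
  (eta_of eta st Cj * #|Cj|%:R <= #|N :&: Cj|%:R).

Definition merge_choice (steps : seq ({set T} * {set T})) (Cstar : {set {set T}})
    (eta : R) (st : state) (Ci Cj N : {set T}) : Prop :=
  [/\ Ci \in clusters st, Cj \in clusters st & Ci != Cj] /\
  [/\ (exists2 Cl, Cl \in Cstar &
         (eta * #|Ci|%:R <= #|Ci :&: Cl|%:R) /\ (eta * #|Cj|%:R <= #|Cj :&: Cl|%:R)),
      merge_ok steps eta st Ci Cj N &
      (forall M, merge_ok steps eta st Ci Cj M -> (depth steps M <= depth steps N)%N)].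

Definition nonempty_sets (L : seq {set T}) : {set {set T}} :=
  [set D in L | D != set0].

Definition merge_result (st : state) (Ci Cj N : {set T}) : state :=
  State ((clusters st :\: [set Ci; Cj])
           :|: nonempty_sets [:: Ci :\: N; Cj :\: N]
           :|: [set N :&: (Ci :|: Cj)])
        ((pure st :\: [set Ci; Cj])
           :|: nonempty_sets ((if Ci \in pure st then [:: Ci :\: N] else [::])
                              ++ (if Cj \in pure st then [:: Cj :\: N] else [::]))
           :|: [set N :&: (Ci :|: Cj)]).

Inductive reachable (steps : seq ({set T} * {set T})) (Cstar : {set {set T}}) (eta : R)
  : state -> Prop :=
  | reach_init P0 : partition P0 [set: T] -> reachable steps Cstar eta (State P0 set0)
  | reach_split st C N N1 N2 : reachable steps Cstar eta st ->
      split_choice steps Cstar st C N N1 N2 ->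
      reachable steps Cstar eta (split_result st C N1 N2)
  | reach_merge st Ci Cj N : reachable steps Cstar eta st ->
      merge_choice steps Cstar eta st Ci Cj N ->
      reachable steps Cstar eta (merge_result st Ci Cj N).

Definition clean_split (Cstar : {set {set T}}) (C C1 C2 : {set T}) : Prop :=
  [/\ C1 != set0, C2 != set0 &
      forall D, D \in Cstar -> C :&: D != set0 ->
        C :&: D = C1 :&: D \/ C :&: D = C2 :&: D].

End Clustering.

From HB Require Import structures.
From mathcomp Require Import all_boot all_order all_algebra.
From mathcomp Require Import lra.
Set Implicit Arguments. Unset Strict Implicit. Unset Printing Implicit Defensive.
Import Order.TTheory GRing.Theory Num.Theory.
Local Open Scope ring_scope.

(* Stability forces average linkage to respect the target clustering: every node
   of the tree is contained in, contains, or is disjoint from each target cluster.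
   Otherwise some merge joins a node N1 strictly inside a target D with a node N2
   disjoint from D; stability makes N1 strictly more similar to D \ N1 than to N2,
   but D \ N1 is a union of current nodes, each at most as similar to N1 as N2 is.
   Given this laminarity, every target meeting an impure cluster C lies entirely in
   one child of the deepest node containing C, so the split is clean.  For a
   merge with common target Cl, the chosen node N can neither be disjoint from Cl
   (two fractions > 1/2 of the same cluster overlap) nor strictly contain it (the
   child containing Cl would still pass both thresholds and be deeper), so N lies
   in Cl; that pure clusters stay inside one target is the invariant making
   the thresholds pass to the child. *)

Section Clustering.
Variables (R : realFieldType) (T : finType) (S : T -> T -> R).

Definition sumS (A B : {set T}) : R := \sum_(x in A) \sum_(y in B) S x y.

Lemma avgS_sym : (forall x y, S x y = S y x) -> forall A B, avgS S A B = avgS S B A.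
Proof.
move=> S_sym A B; rewrite /avgS exchange_big mulnC; congr (_ / _).
by apply: eq_bigr => y _; apply: eq_bigr => x _; rewrite S_sym.
Qed.

Lemma avgS_ltE (A B : {set T}) m : A != set0 -> B != set0 ->
  (avgS S A B < m) = (sumS A B < m * (#|A| * #|B|)%:R).
Proof. by move=> A0 B0; rewrite ltr_pdivrMr // ltr0n muln_gt0 !card_gt0 A0 B0. Qed.

Section Blocks.
Variable P : {set {set T}}.
Hypothesis hP : partition P [set: T].

Lemma sum_over_blocks (B : {set T}) (g : T -> R) :
  \sum_(y in B) g y = \sum_(E in P) \sum_(y in B :&: E) g y.
Proof.
rewrite (eq_bigl (fun y => (y \in [set: T]) && (y \in B))) => [|y]; last by rewrite inE.
rewrite (set_partition_big_cond P hP); apply: eq_bigr => E _.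
by apply: eq_bigl => y; rewrite inE andbC.
Qed.

Lemma sumS_over_blocks (A B : {set T}) :
  sumS A B = \sum_(E in P) sumS A (B :&: E).
Proof.
by rewrite /sumS (exchange_big _ _ _ (mem P)); apply: eq_bigr => x _; apply: sum_over_blocks.
Qed.

Lemma card_over_blocks (B : {set T}) :
  (#|B|%:R : R) = \sum_(E in P) (#|B :&: E|%:R : R).
Proof.
by rewrite -sumr_const (sum_over_blocks B (fun=> 1)); apply: eq_bigr => E _; rewrite sumr_const.
Qed.

Lemma avgS_lt_blocks (A B : {set T}) m : A != set0 -> B != set0 ->
  (forall E, E \in P -> B :&: E != set0 -> avgS S A (B :&: E) < m) ->
  avgS S A B < m.
Proof.
move=> A0 B0 hE; have [y yB] := set0Pn _ B0.
have yP : y \in cover P by rewrite (cover_partition hP).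
have Ey := pblock_mem yP.
have Ey_meet : B :&: pblock P y != set0 by apply/set0Pn; exists y; rewrite inE yB mem_pblock.
rewrite avgS_ltE // sumS_over_blocks natrM (card_over_blocks B) mulr_sumr mulr_sumr.
rewrite (bigD1 _ Ey) [ltRHS](bigD1 _ Ey) /= -natrM.
apply: ltr_leD; first by rewrite -avgS_ltE //; apply: hE.
apply: ler_sum => E /andP [EP _]; rewrite -natrM.
have [->|EB] := eqVneq (B :&: E) set0.
  by rewrite /sumS cards0 muln0 mulr0 big1 // => x _; rewrite big_set0.
by apply: ltW; rewrite -avgS_ltE //; apply: hE.
Qed.

End Blocks.

Lemma disjointsUl (A B C : {set T}) :
  [disjoint A :|: B & C] = [disjoint A & C] && [disjoint B & C].
Proof. by rewrite -!setI_eq0 setIUl setU_eq0. Qed.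

Definition nested_or_disjoint (M D : {set T}) : bool :=
  [|| M \subset D, D \subset M | [disjoint M & D]].

Definition laminar (Cstar : {set {set T}}) (M : {set T}) : Prop :=
  {in Cstar, forall D, nested_or_disjoint M D}.

Lemma nested_or_disjointU (Q1 Q2 D : {set T}) :
  nested_or_disjoint Q1 D -> nested_or_disjoint Q2 D ->
  ~~ ((Q1 \proper D) && [disjoint Q2 & D]) -> ~~ ((Q2 \proper D) && [disjoint Q1 & D]) ->
  nested_or_disjoint (Q1 :|: Q2) D.
Proof.
rewrite /nested_or_disjoint disjointsUl subUset.
case/or3P=> [s1|s1|d1]; case/or3P=> [s2|s2|d2]; rewrite ?s1 ?s2 ?d1 ?d2 ?orbT //=;
  rewrite ?(subset_trans s1 (subsetUl _ _)) ?(subset_trans s2 (subsetUr _ _)) ?orbT //.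
- rewrite andbT properE s1 /= negbK => sD _.
  by rewrite (subset_trans sD (subsetUl _ _)) orbT.
- rewrite andbT [Q2 \proper D]properE s2 /= negbK => _ sD.
  by rewrite (subset_trans sD (subsetUr _ _)) orbT.
Qed.

Lemma subset_children (Q1 Q2 D : {set T}) :
  nested_or_disjoint Q1 D -> nested_or_disjoint Q2 D ->
  D \subset Q1 :|: Q2 -> ~~ (Q1 :|: Q2 \subset D) -> (D \subset Q1) || (D \subset Q2).
Proof.
have sub_other (A B : {set T}) : D \subset A :|: B -> [disjoint A & D] -> D \subset B.
  by move=> sD; rewrite disjoint_sym => /setDidPl <-; rewrite subDset.
move=> + + sD; rewrite subUset.
case/or3P=> [s1|->//|d1]; case/or3P=> [s2|->|d2]; rewrite ?orbT ?s1 ?s2 //=.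
- by rewrite (sub_other Q2 Q1) // setUC.
- by rewrite (sub_other Q1 Q2) ?orbT.
- by rewrite (sub_other Q1 Q2) ?orbT.
Qed.

Lemma partition_merge_nodes (P : {set {set T}}) (D N1 N2 : {set T}) :
  partition P D -> N1 \in P -> N2 \in P -> N1 != N2 -> partition (merge_nodes P N1 N2) D.
Proof.
case/and3P=> /eqP covP tP n0P N1P N2P N12.
have sP'P : P :\: [set N1; N2] \subset P by apply: subsetDl.
have P'P B : B \in P :\: [set N1; N2] -> [/\ B \in P, B != N1 & B != N2].
  by rewrite !inE negb_or => /andP [/andP [-> ->] ->].
rewrite /merge_nodes setUC; apply/and3P; split.
- apply/eqP/setP => x; rewrite -covP; apply/bigcupP/bigcupP => [[B]|[B BP xB]].
    case/setU1P => [-> /setUP [x1|x2]|/P'P [BP _ _] xB]; by [exists N1|exists N2|exists B].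
  have [BN|] := boolP ((B == N1) || (B == N2)).
    by exists (N1 :|: N2); rewrite !inE ?eqxx //; case/orP: BN => /eqP <-; rewrite xB ?orbT.
  by rewrite negb_or => /andP [B1 B2]; exists B; rewrite // !inE negb_or B1 B2 BP orbT.
- suff dN B : B \in P :\: [set N1; N2] -> [disjoint N1 :|: N2 & B].
    by case: (trivIsetU1 dN (trivIsetS sP'P tP) (contra (subsetP sP'P _) n0P)).
  move=> /P'P [BP B1 B2]; rewrite disjointsUl.
  by rewrite !(trivIsetP tP) // eq_sym.
- have N10 : N1 != set0 by apply: contraNneq n0P => <-.
  by rewrite !inE eq_sym setU_eq0 (negbTE N10) (negbTE n0P) andbF.
Qed.

Lemma partition_singletons : partition [set [set x] | x : T] [set: T].
Proof.
apply/and3P; split.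
- apply/eqP/setP => x; rewrite in_setT; apply/bigcupP.
  by exists [set x]; [exact: imset_f | exact: set11].
- apply/trivIsetP => _ _ /imsetP [x _ ->] /imsetP [y _ ->] xy.
  by rewrite disjoints1 inE; apply: contraNN xy => /eqP ->.
- by apply/imsetP => [[x _ /setP /(_ x)]]; rewrite !inE eqxx.
Qed.

Definition merged_nodes (s : seq ({set T} * {set T})) : {set {set T}} :=
  [set M | has (fun p => M == p.1 :|: p.2) s].

Lemma merged_nodes_cons (P : {set {set T}}) (N1 N2 : {set T}) s :
  merge_nodes P N1 N2 :|: merged_nodes s \subset P :|: merged_nodes ((N1, N2) :: s).
Proof.
apply/subsetP => M; rewrite !inE /= => /orP [/orP [/andP [_ ->] //|/eqP ->]|->].
  by rewrite eqxx !orbT.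
by rewrite !orbT.
Qed.

Lemma linkage_run_children (P : {set {set T}}) s :
  linkage_run S P s -> partition P [set: T] -> forall p, p \in s ->
  [/\ p.1 \in P :|: merged_nodes s, p.2 \in P :|: merged_nodes s, [disjoint p.1 & p.2],
      p.1 != set0 & p.2 != set0].
Proof.
elim: s P => [//|[N1 N2] s IH] P /= [N1P N2P N12 _ run] hP p.
have [_ tP n0P] := and3P hP.
rewrite in_cons => /predU1P [-> /=|ps].
  rewrite !inE N1P N2P (trivIsetP tP) //.
  by split => //; apply: contraNneq n0P => <-.
have [h1 h2 d12 n1 n2] := IH _ run (partition_merge_nodes hP N1P N2P N12) p ps.
by split => //; apply: subsetP (merged_nodes_cons P N1 N2 s) _ _.
Qed.

Section LinkageTree.
Variable steps : seq ({set T} * {set T}).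

Lemma connect_child_subset (M N : {set T}) : connect (child_of steps) M N -> M \subset N.
Proof.
have child_sub A B : child_of steps A B -> A \subset B.
  by case/hasP => q _ /andP [/eqP -> /orP [] /eqP ->]; [exact: subsetUl | exact: subsetUr].
case/connectP => p; elim: p M => [|A p IH] M /=; first by move=> _ ->.
by case/andP => /child_sub MA pA lastN; apply: subset_trans MA (IH _ pA lastN).
Qed.

Lemma depth_lt (M N : {set T}) : child_of steps M N -> M \proper N -> N \in tnodes steps ->
  (depth steps N < depth steps M)%N.
Proof.
move=> MN prMN Nt; apply: proper_card; apply/properP; split.
  apply/subsetP => X /setIdP [Xt /andP [XN NX]].
  rewrite inE Xt (connect_trans (connect1 MN) NX).
  rewrite andbT; apply: contraTneq prMN => <-.
  by rewrite properE (connect_child_subset NX) andbF.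
exists N; last by rewrite inE eqxx andbF.
by rewrite inE Nt (connect1 MN) andbT eq_sym (proper_neq prMN).
Qed.

Hypothesis htree : avg_linkage_tree S steps.

Lemma tree_children (Q1 Q2 : {set T}) : (Q1, Q2) \in steps ->
  [/\ Q1 \in tnodes steps, Q2 \in tnodes steps, [disjoint Q1 & Q2], Q1 != set0 & Q2 != set0].
Proof. exact: (linkage_run_children htree partition_singletons). Qed.

Lemma depth_children (Q1 Q2 : {set T}) : (Q1, Q2) \in steps ->
  (depth steps (Q1 :|: Q2) < depth steps Q1)%N /\ (depth steps (Q1 :|: Q2) < depth steps Q2)%N.
Proof.
move=> qs; have [_ _ d12 n1 n2] := tree_children qs.
have Nt : Q1 :|: Q2 \in tnodes steps.
  by apply/setUP; right; rewrite inE; apply/hasP; exists (Q1, Q2).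
have nsub (A B : {set T}) : [disjoint A & B] -> B != set0 -> ~~ (B \subset A).
  by move=> dAB; apply: contraNN => /setIidPr <-; rewrite setI_eq0.
split; apply: depth_lt => //; try by apply/hasP; exists (Q1, Q2); rewrite //= !eqxx ?orbT.
- exact/properUl/nsub.
- by apply/properUr/nsub; rewrite // disjoint_sym.
Qed.

End LinkageTree.

Lemma nb_targets_met_le1 (Cstar : {set {set T}}) (C D : {set T}) : trivIset Cstar ->
  D \in Cstar -> C \subset D -> (nb_targets_met Cstar C <= 1)%N.
Proof.
move=> tC DC CD; rewrite /nb_targets_met -(cards1 D); apply: subset_leq_card.
apply/subsetP => E; rewrite !inE => /andP [EC CE]; apply/eqP; apply: contraTeq CE => ED.
by rewrite negbK setI_eq0; apply: disjointWl CD _; apply: (trivIsetP tC); rewrite // eq_sym.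
Qed.

Lemma fraction_meets (a : R) (X Y : {set T}) : 0 < a -> X != set0 ->
  a * #|X|%:R <= #|X :&: Y|%:R -> X :&: Y != set0.
Proof.
move=> a0 X0; apply: contraTneq => ->; rewrite cards0 -ltNge.
by apply: mulr_gt0; rewrite // ltr0n card_gt0.
Qed.

Lemma fractions_overlap (a b : R) (X Y Z : {set T}) : 1 / 2 < a -> 1 / 2 < b -> X != set0 ->
  a * #|X|%:R <= #|X :&: Y|%:R -> b * #|X|%:R <= #|X :&: Z|%:R -> ~~ [disjoint Y & Z].
Proof.
move=> ha hb X0 hY hZ; apply/negP => dYZ.
have dXYZ : [disjoint X :&: Y & X :&: Z] := disjointW (subsetIr _ _) (subsetIr _ _) dYZ.
have : (#|X :&: Y| + #|X :&: Z| <= #|X|)%N.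
  rewrite -cardsUI (disjoint_setI0 dXYZ) cards0 addn0.
  by apply: subset_leq_card; rewrite subUset !subsetIl.
rewrite -(ler_nat R) natrD.
have : (0 : R) < #|X|%:R by rewrite ltr0n card_gt0.
nra.
Qed.

Section Laminarity.
Hypothesis S_sym : forall x y, S x y = S y x.
Variable Cstar : {set {set T}}.
Hypothesis hCstar : partition Cstar [set: T].
Hypothesis hstab : stable S Cstar.

Definition max_pair (P : {set {set T}}) (N1 N2 : {set T}) : Prop :=
  forall A B, A \in P -> B \in P -> A != B -> avgS S A B <= avgS S N1 N2.

Definition laminar_partition (P : {set {set T}}) : Prop :=
  partition P [set: T] /\ {in P, forall M, laminar Cstar M}.

Lemma max_pair_sym P N1 N2 : max_pair P N1 N2 -> max_pair P N2 N1.
Proof. by move=> hmax A B AP BP AB; rewrite (avgS_sym S_sym N2); apply: hmax. Qed.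

Lemma max_pair_straddleF P N1 N2 D :
  laminar_partition P -> N1 \in P -> N2 \in P -> N1 != N2 -> max_pair P N1 N2 ->
  D \in Cstar -> N1 \proper D -> [disjoint N2 & D] -> False.
Proof.
move=> [hP lamP] N1P N2P N12 hmax DC N1D dN2D.
have [_ tP n0P] := and3P hP.
have N10 : N1 != set0 by apply: contraNneq n0P => <-.
have N20 : N2 != set0 by apply: contraNneq n0P => <-.
have rest0 : D :\: N1 != set0 by rewrite setD_eq0 (proper_subn N1D).
have lt_rest : avgS S N1 N2 < avgS S N1 (D :\: N1).
  apply: (avgS_lt_blocks hCstar N10 N20) => E EC N2E.
  have DE : D != E by apply: contraNneq N2E => <-; rewrite setI_eq0.
  exact: hstab DC EC DE _ _ N10 N1D N2E (subsetIr _ _).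
(* Every block of P meeting D :\: N1 lies inside it and is no more similar to N1 than N2. *)
suff : avgS S N1 (D :\: N1) < avgS S N1 (D :\: N1) by rewrite ltxx.
apply: (avgS_lt_blocks hP N10 rest0) => M MP restM.
have MN1 : M != N1.
  by apply: contraNneq restM => ->; rewrite setIDAC setDIl setDv setI0.
have dMN1 : [disjoint M & N1] by apply: (trivIsetP tP).
have M_rest : M \subset D :\: N1.
  rewrite subsetD dMN1 andbT.
  case/or3P: (lamP M MP D DC) => [//|DM|dMD].
  - have N1M := subset_trans (proper_sub N1D) DM.
    by move: dMN1; rewrite -setI_eq0 (setIidPr N1M) (negbTE N10).
  - case/set0Pn: restM => x; rewrite !inE => /andP [/andP [_ xD] xM].
    by rewrite (disjointFr dMD xM) in xD.
rewrite (setIidPr M_rest); apply: le_lt_trans lt_rest.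
by apply: hmax; rewrite // eq_sym.
Qed.

Lemma laminar_partition_merge P N1 N2 :
  laminar_partition P -> N1 \in P -> N2 \in P -> N1 != N2 -> max_pair P N1 N2 ->
  laminar_partition (merge_nodes P N1 N2).
Proof.
move=> lP N1P N2P N12 hmax; have [hP lamP] := lP.
split; first exact: partition_merge_nodes.
move=> M /setUP [/setDP [MP _]|/set1P ->]; first exact: lamP.
move=> D DC; apply: nested_or_disjointU; rewrite ?lamP //; apply/andP => [[ND dND]].
- exact: (max_pair_straddleF lP N1P N2P N12 hmax DC ND dND).
- by apply: (max_pair_straddleF lP N2P N1P _ (max_pair_sym hmax) DC ND dND); rewrite eq_sym.
Qed.

Lemma laminar_partition_singletons : laminar_partition [set [set x] | x : T].
Proof.
split; first exact: partition_singletons.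
move=> _ /imsetP [x _ ->] D DC; rewrite /nested_or_disjoint sub1set disjoints1.
by case: (x \in D); rewrite ?orbT.
Qed.

Lemma linkage_run_laminar P s : linkage_run S P s -> laminar_partition P ->
  forall p, p \in s -> laminar Cstar (p.1 :|: p.2).
Proof.
elim: s P => [//|[N1 N2] s IH] P /= [N1P N2P N12 hmax run] lP p.
have lP' := laminar_partition_merge lP N1P N2P N12 hmax.
rewrite in_cons => /predU1P [-> /=|]; last exact: IH run lP' p.
by apply: lP'.2; rewrite !inE eqxx orbT.
Qed.

Section Process.
Variable steps : seq ({set T} * {set T}).
Hypothesis htree : avg_linkage_tree S steps.

Lemma tnodes_laminar M : M \in tnodes steps -> laminar Cstar M.
Proof.
case/setUP => [Ms|]; first exact: laminar_partition_singletons.2.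
rewrite inE => /hasP [p ps /eqP ->].
exact: linkage_run_laminar htree laminar_partition_singletons _ ps.
Qed.

Lemma target_in_child (Q1 Q2 D : {set T}) : (Q1, Q2) \in steps -> D \in Cstar ->
  D \subset Q1 :|: Q2 -> ~~ (Q1 :|: Q2 \subset D) -> (D \subset Q1) || (D \subset Q2).
Proof.
move=> qs DC; have [Q1t Q2t _ _ _] := tree_children htree qs.
by apply: subset_children; apply: tnodes_laminar.
Qed.

Lemma target_in_deeper_node (N D : {set T}) : N \in tnodes steps -> D \in Cstar ->
  D \subset N -> ~~ (N \subset D) ->
  exists Q, [/\ Q \in tnodes steps, D \subset Q & (depth steps N < depth steps Q)%N].
Proof.
move=> Nt DC DN NnD; have [_ _ n0C] := and3P hCstar.
have D0 : D != set0 by apply: contraNneq n0C => <-.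
case/setUP: Nt => [/imsetP [x _ Nx]|].
  case/set0Pn: D0 => y yD; move: (subsetP DN y yD) NnD; rewrite Nx inE => /eqP <-.
  by rewrite sub1set yD.
rewrite inE => /hasP [[Q1 Q2] qs /= /eqP NQ]; rewrite NQ in DN NnD *.
have [Q1t Q2t _ _ _] := tree_children htree qs.
have [dp1 dp2] := depth_children htree qs.
by case/orP: (target_in_child qs DC DN NnD) => DQ; [exists Q1 | exists Q2].
Qed.

Lemma split_clean st C N N1 N2 : split_choice steps Cstar st C N N1 N2 ->
  clean_split Cstar C (C :&: N1) (C :&: N2).
Proof.
case=> [[_ nbC Nt CN deepest] [qs NE]]; subst N.
have [_ tC _] := and3P hCstar.
have [dp1 dp2] := depth_children htree qs.
have [Q1t Q2t _ _ _] := tree_children htree qs.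
have CnD D : D \in Cstar -> ~~ (C \subset D).
  by move=> DC; apply: contraTN nbC => /(nb_targets_met_le1 tC DC); rewrite -leqNgt.
have meets (A B : {set T}) : C \subset A :|: B -> B \in tnodes steps ->
    (depth steps (N1 :|: N2) < depth steps B)%N -> C :&: A != set0.
  move=> CAB Bt; apply: contraTneq => CA0; rewrite -leqNgt; apply: deepest Bt _.
  by rewrite -(setIidPl CAB) setIUr CA0 set0U subsetIr.
split; [exact: (meets N1 N2) | by apply: (meets N2 N1); rewrite // setUC |].
move=> D DC CD; case/or3P: (tnodes_laminar Nt DC) => [ND|DN|dND].
- by case/negP: (CnD D DC); apply: subset_trans CN ND.
- have NnD : ~~ (N1 :|: N2 \subset D) by apply: contra (CnD D DC); apply: subset_trans CN.
  case/orP: (target_in_child qs DC DN NnD) => DQ;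
    [left | right]; by rewrite -setIA (setIidPr DQ).
- by case/negP: CD; rewrite setI_eq0; apply: disjointWl CN dND.
Qed.

Section Merge.
Variable eta : R.
Hypothesis heta : 1 / 2 < eta.

Definition pure_inv (st : state T) : Prop :=
  {in clusters st, forall C : {set T}, C != set0} /\
  {in pure st, forall C : {set T}, exists2 D, D \in Cstar & C \subset D}.

Lemma eta_of_gt_half (st : state T) (X : {set T}) : 1 / 2 < eta_of eta st X.
Proof. by rewrite /eta_of; case: ifP => // _; lra. Qed.

Lemma eta_of_gt0 (st : state T) (X : {set T}) : 0 < eta_of eta st X.
Proof. by apply: lt_trans (eta_of_gt_half st X); lra. Qed.

Lemma pure_sub_target st (X Cl : {set T}) : pure_inv st -> X \in pure st -> Cl \in Cstar ->
  X :&: Cl != set0 -> X \subset Cl.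
Proof.
move=> [_ hpure] /hpure [D DC XD] ClC XCl; have [_ tC _] := and3P hCstar.
have [<- //|DCl] := eqVneq D Cl.
by case/negP: XCl; rewrite setI_eq0; apply: disjointWl XD (trivIsetP tC _ _ DC ClC DCl).
Qed.

Lemma merge_threshold_superset st (X Cl M : {set T}) :
  pure_inv st -> X \in clusters st -> Cl \in Cstar ->
  eta * #|X|%:R <= #|X :&: Cl|%:R -> Cl \subset M ->
  eta_of eta st X * #|X|%:R <= #|M :&: X|%:R.
Proof.
move=> inv XC ClC hX ClM; rewrite /eta_of; case: ifP => pX.
  have eta_gt0 : 0 < eta by apply: lt_trans heta; lra.
  have XCl := pure_sub_target inv pX ClC (fraction_meets eta_gt0 (inv.1 _ XC) hX).
  by rewrite mul1r (setIidPr (subset_trans XCl ClM)).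
by apply: le_trans hX _; rewrite ler_nat subset_leq_card // [M :&: X]setIC setIS.
Qed.

Lemma merge_pure st Ci Cj N : pure_inv st -> merge_choice steps Cstar eta st Ci Cj N ->
  exists2 Cl, Cl \in Cstar & N :&: (Ci :|: Cj) \subset Cl.
Proof.
move=> inv [[CiC CjC _] [[Cl ClC [hi hj]] [Nt [mi _]] deepest]].
exists Cl => //; apply: subset_trans (subsetIl _ _) _.
case/or3P: (tnodes_laminar Nt ClC) => [//|ClN|dNCl].
- apply/idPn => NnCl.
  have [Q [Qt ClQ dpQ]] := target_in_deeper_node Nt ClC ClN NnCl.
  have okQ : merge_ok steps eta st Ci Cj Q.
    split=> //; split; apply: (merge_threshold_superset inv) ClQ => //.
  by move: (deepest Q okQ); rewrite leqNgt dpQ.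
- rewrite setIC in mi.
  by move: (fractions_overlap (eta_of_gt_half st Ci) heta (inv.1 _ CiC) mi hi); rewrite dNCl.
Qed.

Lemma reachable_pure_inv st : reachable steps Cstar eta st -> pure_inv st.
Proof.
elim=> {st} [P0 hP0|st C N N1 N2 _ [nonempty hpure] sc|st Ci Cj N _ inv mc].
- split=> C; last by rewrite inE.
  by case/and3P: hP0 => _ _ n0 CP; apply: contraNneq n0 => <-.
- have [n1 n2 _] := split_clean sc.
  split=> X; rewrite !inE; last by case/andP => _ /hpure.
  by case/orP => [/andP [_ /nonempty]|/orP [] /eqP ->].
- have [[CiC CjC _] [_ [_ [mi _]] _]] := mc.
  have [nonempty hpure] := inv.
  split=> X; rewrite !inE.
    case/orP => [/orP [/andP [_ /nonempty] //|/andP [_ //]]|/eqP ->].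
    rewrite setIC in mi.
    case/set0Pn: (fraction_meets (eta_of_gt0 st Ci) (nonempty _ CiC) mi) => x /setIP [xCi xN].
    by apply/set0Pn; exists x; rewrite !inE xN xCi.
  case/orP => [/orP [/andP [_ /hpure] //|]|/eqP ->]; last exact: merge_pure inv mc.
  rewrite mem_cat => /andP [+ _].
  by case/orP; case: ifP => p //; rewrite inE => /eqP ->; have [D DC sD] := hpure _ p;
    exists D; rewrite // (subset_trans (subsetDl _ _) sD).
Qed.

End Merge.
End Process.
End Laminarity.
End Clustering.

Theorem lemma13 (R : realFieldType) (T : finType) (S : T -> T -> R)
    (S_sym : forall x y, S x y = S y x)
    (Cstar : {set {set T}}) (hCstar : partition Cstar [set: T])
    (hstab : stable S Cstar)
    (eta : R) (heta : 1 / 2 < eta)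
    (steps : seq ({set T} * {set T})) (htree : avg_linkage_tree S steps)
    (st : state T) (hst : reachable steps Cstar eta st) :
  (forall C N N1 N2, split_choice steps Cstar st C N N1 N2 ->
     clean_split Cstar C (C :&: N1) (C :&: N2)) /\
  (forall Ci Cj N, merge_choice steps Cstar eta st Ci Cj N ->
     exists2 Cl, Cl \in Cstar & N :&: (Ci :|: Cj) \subset Cl).
Proof.
split=> [C N N1 N2 | Ci Cj N]; first exact: (split_clean S_sym hCstar hstab htree).
have inv := reachable_pure_inv S_sym hCstar hstab htree heta hst.
exact: (merge_pure S_sym hCstar hstab htree heta inv).
Qed.
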